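(* Let $R$ be a standard rule and let $(N,c,E,h)$ be a historical claims problem, with history-adjusted claims vector $\widetilde{c}$. Then there exists $\overline{\lambda}\in\mathbb{R}_+$ such that $$\sum_{i\in N}\min\left\{c_i,\,R_i(N,\widetilde{c},E)+\overline{\lambda}\right\}=E.$$ Moreover, if $C=\sum_{i\in N}c_i>E$, then such $\overline{\lambda}$ is unique; whereas if $C=E$, such $\overline{\lambda}$ is not unique, but the vector $\left(\min\{c_i,R_i(N,\widetilde{c},E)+\overline{\lambda}\}\right)_{i\in N}$ is the same for all such $\overline{\lambda}$.
   Context: Agents are elements of $\mathbb{N}$; $N$ denotes a nonempty finite subset of $\mathbb{N}$. A (standard) claims problem is a triple $(N,c,E)$ with $c\in\mathbb{R}_+^N$, $E\in\mathbb{R}_+$, $C=\sum_{i\in N}c_i>0$ and $E\le C$. An allocation for it is $x\in\mathbb{R}^N$ with $0\le x_i\le c_i$ for all $i$ and $\sum_{i\in N}x_i=E$. A standard rule $R$ assigns to every standard claims problem $(N,c,E)$ an allocation $R(N,c,E)$. A history for $N$ is a finite sequence $h=\{(c^{(t)},x^{(t)})\}_{t=1}^{|T|}$ where, for each $t$, $c^{(t)}\in\mathbb{R}_+^N$ and $x^{(t)}$ is an allocation of the standard claims problem $(N,c^{(t)},\sum_{i}x^{(t)}_i)$ (in particular $0\le x_i^{(t)}\le c_i^{(t)}$). A historical claims problem is a 4-tuple $(N,c,E,h)$ where $(N,c,E)$ is a standard claims problem and $h$ is a history for $N$. For each $i\in N$ let $\Delta^c_i=\sum_{t=1}^{|T|}c_i^{(t)}$,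 $\Delta^x_i=\sum_{t=1}^{|T|}x_i^{(t)}$, and the history-adjusted claim $\widetilde{c}_i=c_i+\Delta^c_i-\Delta^x_i$ (so $\widetilde{c}\ge c$ and $(N,\widetilde{c},E)$ is a standard claims problem). *)

From HB Require Import structures.
From mathcomp Require Import all_boot all_order all_algebra.
From mathcomp Require Import finmap.
From mathcomp Require Import reals.
Set Implicit Arguments. Unset Strict Implicit. Unset Printing Implicit Defensive.
Import Order.TTheory GRing.Theory Num.Theory.
Local Open Scope ring_scope.
Local Open Scope fset_scope.

Section Claims.
Variable R : realType.

(* Claims / allocation vectors are functions nat -> R; only values on N matter. *)
Definition sum_over (N : {fset nat}) (v : nat -> R) : R := \sum_(i <- N) v i.

Definition standard_problem (N : {fset nat}) (c : nat -> R) (E : R) : Prop :=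
  [/\ N != fset0, (forall i, i \in N -> 0 <= c i), 0 <= E,
      0 < sum_over N c & E <= sum_over N c].

Definition allocation (N : {fset nat}) (c : nat -> R) (E : R) (x : nat -> R) : Prop :=
  (forall i, i \in N -> 0 <= x i <= c i) /\ sum_over N x = E.

Definition standard_rule
  (Rl : {fset nat} -> (nat -> R) -> R -> (nat -> R)) : Prop :=
  forall N c E, standard_problem N c E -> allocation N c E (Rl N c E).

Definition history (N : {fset nat}) (h : seq ((nat -> R) * (nat -> R))) : Prop :=
  forall t, (t < size h)%N ->
    let p := nth (fun _ => 0, fun _ => 0) h t in
    standard_problem N p.1 (sum_over N p.2) /\ allocation N p.1 (sum_over N p.2) p.2.

Definition adjusted_claims (c : nat -> R) (h : seq ((nat -> R) * (nat -> R)))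
  : nat -> R :=
  fun i => c i + \sum_(p <- h) p.1 i - \sum_(p <- h) p.2 i.

End Claims.

From HB Require Import structures.
From mathcomp Require Import all_boot all_order all_algebra.
From mathcomp Require Import finmap.
From mathcomp Require Import reals topology normedtype.
Import numFieldNormedType.Exports.
Import Order.TTheory GRing.Theory Num.Theory.
Local Open Scope ring_scope.

(* Since every x^(t) is bounded by c^(t), the adjusted claims dominate c, so
   (N, c~, E) is a standard problem and x := R(N, c~, E) is an allocation of E
   with x >= 0.  The function f(l) = sum_i min(c_i, x_i + l) is continuous and
   nondecreasing, with f(0) <= sum_i x_i = E and f(l) = C once l >= C, so the
   intermediate value theorem yields a root l >= 0.  Two roots l1 <> l2 give
   termwise equal summands, and min(c_i, x_i + l1) = min(c_i, x_i + l2) forces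
   both to be c_i; hence f(l1) = C, which is impossible when E < C.  When
   E = C, every l >= C is a root. *)

Lemma ler_sum_mem {R : numDomainType} {I : eqType} {s : seq I} {F : I -> R} {i} :
  {in s, forall j, 0 <= F j} -> i \in s -> F i <= \sum_(j <- s) F j.
Proof.
move=> F_ge0 s_i; rewrite (perm_big _ (perm_to_rem s_i)) big_cons lerDl.
rewrite big_seq_cond; apply: sumr_ge0 => j /andP[/mem_rem j_s _].
exact: F_ge0.
Qed.

Lemma ler_sum_eq_in {R : numDomainType} {I : eqType} {s : seq I} {F G : I -> R} :
  {in s, forall i, F i <= G i} ->
  \sum_(i <- s) F i = \sum_(i <- s) G i -> {in s, F =1 G}.
Proof.
move=> le_FG eq_sum.
have : \sum_(i <- s | i \in s) (G i - F i) == 0.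
  by rewrite -big_seq sumrB eq_sum subrr.
rewrite psumr_eq0 => [/allP all0 i s_i|i s_i]; last by rewrite subr_ge0 le_FG.
by apply/esym/eqP; rewrite -subr_eq0; apply: implyP (all0 i s_i) s_i.
Qed.

Lemma min_shift_eq {R : realDomainType} {a b l1 l2 : R} :
  l1 != l2 -> Num.min a (b + l1) = Num.min a (b + l2) -> Num.min a (b + l1) = a.
Proof.
wlog lt12 : l1 l2 / l1 < l2.
  move=> W ne12 eq12; case: (ltgtP l1 l2) => [lt12|lt21|e12].
  - exact: W lt12 ne12 eq12.
  - by rewrite eq12; apply: (W l2 l1); rewrite // eq_sym.
  - by rewrite e12 eqxx in ne12.
move=> _ eq12; case: (leP a (b + l1)) => [/min_l //|lt_a].
have : b + l1 < Num.min a (b + l2) by rewrite lt_min lt_a ltrD2l.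
by rewrite -eq12 (min_r (ltW lt_a)) ltxx.
Qed.

Definition capped_sum {R : numDomainType} {I : eqType} (s : seq I) (c x : I -> R)
    (l : R) : R :=
  \sum_(i <- s) Num.min (c i) (x i + l).

Section CappedSum.
Context {R : realType} {I : eqType} {s : seq I} {c x : I -> R}.

Lemma continuous_capped_sum : continuous (capped_sum s c x).
Proof.
apply: (continuous_big (op := +%R) (x0 := 0 : R^o)); first exact: add_continuous.
move=> i _ l; apply: continuous_min; first exact: cvg_cst.
by apply: continuousD; [exact: cvg_cst | exact: cvg_id].
Qed.

Lemma capped_sum0_le : capped_sum s c x 0 <= \sum_(i <- s) x i.
Proof. by apply: ler_sum => i _; rewrite addr0 ge_min lexx orbT. Qed.

Lemma capped_sum_saturated l :
  {in s, forall i, c i <= x i + l} -> capped_sum s c x l = \sum_(i <- s) c i.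
Proof.
move=> le_c; rewrite /capped_sum big_seq [RHS]big_seq.
by apply: eq_bigr => i /le_c/min_l.
Qed.

Lemma capped_sum_eq_terms {l1 l2} :
  capped_sum s c x l1 = capped_sum s c x l2 ->
  {in s, forall i, Num.min (c i) (x i + l1) = Num.min (c i) (x i + l2)}.
Proof.
wlog le12 : l1 l2 / l1 <= l2.
  move=> W eq12 i s_i; case: (leP l1 l2) => [le12|/ltW le21]; first exact: W.
  by rewrite (W l2 l1).
by apply: ler_sum_eq_in => i _; rewrite le_min2 // lerD2l.
Qed.

Lemma capped_sum_eq_neq {l1 l2} :
  l1 != l2 -> capped_sum s c x l1 = capped_sum s c x l2 ->
  capped_sum s c x l1 = \sum_(i <- s) c i.
Proof.
move=> ne12 /capped_sum_eq_terms eq_terms.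
rewrite /capped_sum big_seq [RHS]big_seq; apply: eq_bigr => i s_i.
exact: min_shift_eq ne12 (eq_terms i s_i).
Qed.

Hypotheses (x_ge0 : {in s, forall i, 0 <= x i}) (c_ge0 : {in s, forall i, 0 <= c i}).

Lemma capped_sum_large l :
  \sum_(i <- s) c i <= l -> capped_sum s c x l = \sum_(i <- s) c i.
Proof.
move=> le_l; apply: capped_sum_saturated => i s_i.
by rewrite -[c i]add0r lerD ?x_ge0 // (le_trans (ler_sum_mem c_ge0 s_i)).
Qed.

Lemma capped_sum_root {E : R} :
  capped_sum s c x 0 <= E -> E <= \sum_(i <- s) c i ->
  exists2 l, 0 <= l & capped_sum s c x l = E.
Proof.
move=> f0_le E_le; set C := \sum_(i <- s) c i.
have C_ge0 : 0 <= C by rewrite /C big_seq; apply: sumr_ge0 => i /c_ge0.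
have [l] : exists2 l, l \in `[0, C] & capped_sum s c x l = E.
  apply: IVT => //; first exact/continuous_subspaceT/continuous_capped_sum.
  by rewrite (capped_sum_large C) // ge_min f0_le le_max E_le orbT.
by rewrite in_itv /= => /andP[l_ge0 _]; exists l.
Qed.

End CappedSum.

Lemma history_claims_ge {R : realType} {N : {fset nat}}
    {h : seq ((nat -> R) * (nat -> R))} :
  history N h -> {in N, forall i, \sum_(p <- h) p.2 i <= \sum_(p <- h) p.1 i}.
Proof.
elim: h => [|p h IH] hist i N_i; first by rewrite !big_nil.
rewrite !big_cons; apply: lerD; last by apply: IH => // t; apply: (hist t.+1).
by have [_ [/(_ i N_i)/andP[]]] := hist 0%N isT.
Qed.

Lemma adjusted_claims_ge {R : realType} {N : {fset nat}} {c}
    {h : seq ((nat -> R) * (nat -> R))} :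
  history N h -> {in N, forall i, c i <= adjusted_claims c h i}.
Proof.
move=> hist i N_i; rewrite /adjusted_claims -addrA lerDl subr_ge0.
exact: history_claims_ge hist i N_i.
Qed.

Lemma adjusted_problem_standard {R : realType} {N : {fset nat}} {c E}
    {h : seq ((nat -> R) * (nat -> R))} :
  standard_problem N c E -> history N h -> standard_problem N (adjusted_claims c h) E.
Proof.
move=> [N0 c_ge0 E_ge0 C_gt0 E_le_C] /adjusted_claims_ge ct_ge.
have C_le : sum_over N c <= sum_over N (adjusted_claims c h).
  by rewrite /sum_over big_seq [X in _ <= X]big_seq; apply: ler_sum => i /ct_ge.
split => //; [|exact: lt_le_trans C_le|exact: le_trans C_le].
by move=> i N_i; rewrite (le_trans (c_ge0 i N_i)) ?ct_ge.
Qed.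

Theorem proposition1 (R : realType)
  (Rl : {fset nat} -> (nat -> R) -> R -> (nat -> R))
  (N : {fset nat}) (c : nat -> R) (E : R) (h : seq ((nat -> R) * (nat -> R))) :
  standard_rule Rl ->
  standard_problem N c E ->
  history N h ->
  let ct := adjusted_claims c h in
  let sol := fun lam : R =>
    0 <= lam /\ \sum_(i <- N) Num.min (c i) (Rl N ct E i + lam) = E in
  (exists lam, sol lam) /\
  (E < sum_over N c -> forall l1 l2, sol l1 -> sol l2 -> l1 = l2) /\
  (sum_over N c = E ->
     (exists l1 l2, sol l1 /\ sol l2 /\ l1 <> l2) /\
     (forall l1 l2, sol l1 -> sol l2 -> forall i, i \in N ->
        Num.min (c i) (Rl N ct E i + l1) = Num.min (c i) (Rl N ct E i + l2))).
Proof.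
move=> rule prob hist ct sol.
have [x_alloc sum_x] := rule _ _ _ (adjusted_problem_standard prob hist).
set x := Rl N ct E in x_alloc sum_x *.
have x_ge0 : {in N, forall i, 0 <= x i} by move=> i /x_alloc/andP[].
have [_ c_ge0 E_ge0 _ E_le_C] := prob.
have sol_eq l1 l2 : sol l1 -> sol l2 -> capped_sum N c x l1 = capped_sum N c x l2.
  by move=> [_ f1] [_ f2]; exact: etrans f1 (esym f2).
split; [|split].
- have f0_le : capped_sum N c x 0 <= E by rewrite -sum_x capped_sum0_le.
  have [l l_ge0 fl] := capped_sum_root x_ge0 c_ge0 f0_le E_le_C.
  by exists l.
- move=> E_lt_C l1 l2 sol1 sol2; apply/eqP; apply: contraTT E_lt_C => ne12.
  have -> : E = sum_over N c :=
    etrans (esym sol1.2) (capped_sum_eq_neq ne12 (sol_eq _ _ sol1 sol2)).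
  by rewrite ltxx.
- move=> C_eq_E; split; last first.
    by move=> l1 l2 sol1 sol2; exact: capped_sum_eq_terms (sol_eq _ _ sol1 sol2).
  have sol_large l : sum_over N c <= l -> sol l.
    move=> le_l; split; first exact: le_trans E_ge0 (le_trans E_le_C le_l).
    exact: etrans (capped_sum_large x_ge0 c_ge0 l le_l) C_eq_E.
  exists (sum_over N c), (sum_over N c + 1); split; [exact: sol_large|split].
  + by apply: sol_large; rewrite lerDl.
  + by apply/eqP; rewrite lt_eqF // ltrDl.
Qed.
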